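(* Let $E^2$ denote the Stokes operator in tangent sphere coordinates $(\mu,\nu,\varphi)$, acting on functions $\psi(\mu,\nu)$ with $\mu>0$, $\nu\in\mathbb{R}$, by $$E^2\psi=(\mu^2+\nu^2)^2\left[\frac{\partial^2\psi}{\partial \mu^2}+\frac{\mu^2-\nu^2}{\mu(\mu^2+\nu^2)}\frac{\partial\psi}{\partial \mu}+\frac{2\nu}{\mu^2+\nu^2}\frac{\partial\psi}{\partial \nu}+\frac{\partial^2\psi}{\partial \nu^2}\right].$$ Then the equation $E^2\psi=0$ $R$-separates variables with $R(\mu,\nu)=\sqrt{\mu^2+\nu^2}$: for twice differentiable, nowhere vanishing $M$ and $N$, the function $\psi(\mu,\nu)=\frac{1}{\sqrt{\mu^2+\nu^2}}M(\mu)N(\nu)$ satisfies $E^2\psi=0$ if and only if there is a constant $\lambda$ with $$\frac{M''}{M}-\frac{1}{\mu}\frac{M'}{M}=\lambda=-\frac{N''}{N}.$$ Moreover, for $\lambda=n^2>0$ the solutions are exactly $$M(\mu)=c_1\mu I_1(n\mu)+c_2\mu K_1(n\mu),\qquad N(\nu)=c_3\cos(n\nu)+c_4\sin(n\nu),$$ with arbitrary constants $c_1,\dots,c_4$; in particular every function $\psi(\mu,\nu)=\frac{1}{\sqrt{\mu^2+\nu^2}}\big[c_1\mu I_1(n\mu)+c_2\mu K_1(n\mu)\big]\big[c_3\cos(n\nu)+c_4\sin(n\nu)\big]$ with $n>0$ satisfies $E^2\psi=0$.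
   Context: Tangent sphere coordinates $(\mu,\nu,\varphi)$, $\mu>0$, $\nu\in\mathbb{R}$, $\varphi\in[0,2\pi)$, are given by $x=\frac{\mu\cos\varphi}{\mu^2+\nu^2}$, $y=\frac{\mu\sin\varphi}{\mu^2+\nu^2}$, $z=\frac{\nu}{\mu^2+\nu^2}$. For a rotational coordinate system $x=\rho(q_1,q_2)\cos\varphi$, $y=\rho(q_1,q_2)\sin\varphi$, $z=z(q_1,q_2)$, with $h_i=\big((\partial_{q_i}\rho)^2+(\partial_{q_i}z)^2\big)^{-1/2}$ and $\varpi=|\rho|$, the Stokes operator is $E^2=h_1h_2\varpi\big[\partial_{q_1}\big(\tfrac{h_1}{h_2\varpi}\partial_{q_1}\big)+\partial_{q_2}\big(\tfrac{h_2}{h_1\varpi}\partial_{q_2}\big)\big]$; in tangent sphere coordinates this is the displayed formula. $I_1,K_1$ are the modified Bessel functions of order one of the first and second kind. Note $R=\sqrt{\mu^2+\nu^2}$ equals the reciprocal of the Euclidean distance $\sqrt{x^2+y^2+z^2}$. *)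

From Stdlib Require Import Reals.
From Coquelicot Require Import Coquelicot.
Open Scope R_scope.

Definition E2 (psi : R -> R -> R) (mu nu : R) : R :=
  (mu ^ 2 + nu ^ 2) ^ 2 *
  ( Derive (fun m => Derive (fun m' => psi m' nu) m) mu
  + (mu ^ 2 - nu ^ 2) / (mu * (mu ^ 2 + nu ^ 2)) * Derive (fun m => psi m nu) mu
  + 2 * nu / (mu ^ 2 + nu ^ 2) * Derive (fun v => psi mu v) nu
  + Derive (fun v => Derive (fun v' => psi mu v') v) nu ).

Definition sepR (M N : R -> R) (mu nu : R) : R :=
  / sqrt (mu ^ 2 + nu ^ 2) * M mu * N nu.

Definition I1 (x : R) : R :=
  Series (fun k => (x / 2) ^ (2 * k + 1) / (INR (Factorial.fact k) * INR (Factorial.fact (k + 1)))).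

(* Modified Bessel function of the second kind, order 1 (x > 0):
   K_1(x) = int_0^oo exp(-x cosh t) cosh t dt  (DLMF 10.32.9). *)
Definition K1 (x : R) : R :=
  RInt_gen (fun t => exp (- x * cosh t) * cosh t) (at_point 0) (Rbar_locally p_infty).

Definition twice_diff_pos (M : R -> R) : Prop :=
  forall mu, 0 < mu -> ex_derive M mu /\ ex_derive (Derive M) mu.

Definition twice_diff (N : R -> R) : Prop :=
  forall nu, ex_derive N nu /\ ex_derive (Derive N) nu.

(* Writing psi = M(mu) N(nu) / R, a direct computation gives
   E^2 psi = R^3 (M'' N - M' N / mu + M N''), so E^2 psi = 0 separates into
   M''/M - M'/(mu M) = lambda = - N''/N.  For lambda = n^2 both separated equations are
   linear of second order, and by Abel's identity any two solutions with a nonvanishing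
   Wronskian span all solutions.  For N these are cos (n nu) and sin (n nu).  For M the
   substitution M(mu) = mu f(n mu) leads to the modified Bessel equation
   x^2 f'' + x f' - (x^2 + 1) f = 0, solved by I1 (termwise, on its power series) and by
   K1 (K1' = - int e^(-x cosh t) cosh^2 t dt, and the Bessel expression of K1 is the integral
   of an exact derivative vanishing at 0 and +oo).  As I1, I1', K1 > 0 > K1', the Wronskian
   of I1 and K1 is negative. *)

From Stdlib Require Import Reals Factorial Lra Psatz FunctionalExtensionality.
From Coquelicot Require Import Coquelicot.
Open Scope R_scope.

(* [auto_derive] leaves the unknown functions eta-expanded under [Derive]. *)
Ltac eta_Derive :=
  repeat match goal with
  | |- context [Derive (fun x => ?f x)] => change (Derive (fun x => f x)) with (Derive f)
  end.

(* Coquelicot states some real equalities at the carrier of [R_AbsRing], which [field]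
   does not recognise. *)
Ltac R_eq := lazymatch goal with |- ?a = ?b => change (@eq R a b) end.

(** * Separation of variables for E^2 *)

Lemma Derive_div_sqrt (f : R -> R) c t :
  ex_derive f t -> 0 < t ^ 2 + c ->
  Derive (fun s => f s / sqrt (s ^ 2 + c)) t
  = (Derive f t - f t * t / (t ^ 2 + c)) / sqrt (t ^ 2 + c).
Proof.
  intros Hf Hc. pose proof (sqrt_lt_R0 _ Hc) as Hs.
  apply is_derive_unique. auto_derive.
  - replace (t * (t * 1) + c) with (t ^ 2 + c) by ring. repeat split; auto; lra.
  - replace (t * (t * 1) + c) with (t ^ 2 + c) by ring. eta_Derive.
    R_eq. set (r := sqrt (t ^ 2 + c)) in *.
    assert (Hr : t ^ 2 + c = r * r) by (symmetry; apply sqrt_sqrt; lra).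
    clearbody r. rewrite Hr. field. lra.
Qed.

Lemma Derive2_div_sqrt (f : R -> R) c t :
  locally t (fun s => ex_derive f s /\ 0 < s ^ 2 + c) -> ex_derive (Derive f) t ->
  Derive (Derive (fun s => f s / sqrt (s ^ 2 + c))) t
  = (Derive (Derive f) t - 2 * Derive f t * t / (t ^ 2 + c) - f t / (t ^ 2 + c)
     + 3 * f t * t ^ 2 / (t ^ 2 + c) ^ 2) / sqrt (t ^ 2 + c).
Proof.
  intros Hloc Hf2. destruct (locally_singleton _ _ Hloc) as [Hf Hc].
  pose proof (sqrt_lt_R0 _ Hc) as Hs.
  rewrite (Derive_ext_loc _ (fun s => (Derive f s - f s * s / (s ^ 2 + c)) / sqrt (s ^ 2 + c))).
  2: { revert Hloc; apply filter_imp. intros s [Hfs Hcs]. now apply Derive_div_sqrt. }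
  apply is_derive_unique. auto_derive.
  - replace (t * (t * 1) + c) with (t ^ 2 + c) by ring. repeat split; auto; lra.
  - replace (t * (t * 1) + c) with (t ^ 2 + c) by ring. eta_Derive.
    R_eq. set (r := sqrt (t ^ 2 + c)) in *.
    assert (Hr : t ^ 2 + c = r * r) by (symmetry; apply sqrt_sqrt; lra).
    clearbody r. rewrite Hr. field. lra.
Qed.

Lemma Derive_scal_fun (k : R) (f : R -> R) :
  Derive (fun x => k * f x) = fun x => k * Derive f x.
Proof. apply functional_extensionality. intro x. apply Derive_scal. Qed.

Lemma E2_sepR (M N : R -> R) mu nu :
  twice_diff_pos M -> twice_diff N -> 0 < mu ->
  E2 (sepR M N) mu nu = (mu ^ 2 + nu ^ 2) ^ 2 / sqrt (mu ^ 2 + nu ^ 2) *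
    (Derive (Derive M) mu * N nu - / mu * Derive M mu * N nu + M mu * Derive (Derive N) nu).
Proof.
  intros HM HN Hmu. unfold E2.
  assert (Hsep_mu : (fun m => sepR M N m nu) = fun m => N nu * (M m / sqrt (m ^ 2 + nu ^ 2))).
  { apply functional_extensionality. intro m. unfold sepR, Rdiv. ring. }
  assert (Hsep_nu : (fun v => sepR M N mu v) = fun v => M mu * (N v / sqrt (v ^ 2 + mu ^ 2))).
  { apply functional_extensionality. intro v.
    unfold sepR, Rdiv. rewrite (Rplus_comm (v ^ 2)). ring. }
  rewrite Hsep_mu, Hsep_nu, !Derive_scal_fun. cbv beta.
  assert (Hpos : 0 < mu ^ 2 + nu ^ 2) by nra.
  destruct (HM mu Hmu) as [dM ddM], (HN nu) as [dN ddN].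
  rewrite (Derive2_div_sqrt M), (Derive_div_sqrt M), (Derive2_div_sqrt N), (Derive_div_sqrt N);
    auto; try nra.
  - rewrite (Rplus_comm (nu ^ 2)).
    assert (0 < sqrt (mu ^ 2 + nu ^ 2)) by (apply sqrt_lt_R0; lra).
    field. repeat split; lra.
  - apply filter_forall. intro v. split; [apply HN|nra].
  - apply (filter_imp (fun m => 0 < m)); [|apply open_gt; auto].
    intros m Hm. split; [apply HM; auto|nra].
Qed.

Lemma separation_constant (P : R -> Prop) (A B : R -> R) x0 :
  P x0 ->
  (forall x y, P x -> A x = B y) <->
  exists lam, (forall x, P x -> A x = lam) /\ (forall y, B y = lam).
Proof.
  intros Hx0. split.
  - intros H. exists (A x0). split.
    + intros x Hx. rewrite (H x 0), (H x0 0); auto.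
    + intros y. symmetry; auto.
  - intros [lam [HA HB]] x y Hx. rewrite HA, HB; auto.
Qed.

Lemma E2_sepR_eq0_iff (M N : R -> R) mu nu :
  twice_diff_pos M -> twice_diff N -> 0 < mu -> M mu <> 0 -> N nu <> 0 ->
  E2 (sepR M N) mu nu = 0 <->
  Derive (Derive M) mu / M mu - / mu * (Derive M mu / M mu) = - (Derive (Derive N) nu / N nu).
Proof.
  intros HM HN Hmu HM0 HN0. rewrite E2_sepR by auto.
  set (A := Derive (Derive M) mu / M mu - / mu * (Derive M mu / M mu)).
  set (B := - (Derive (Derive N) nu / N nu)).
  assert (Hpos : 0 < (mu ^ 2 + nu ^ 2) ^ 2 / sqrt (mu ^ 2 + nu ^ 2)).
  { assert (0 < mu ^ 2 + nu ^ 2) by nra.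
    apply Rdiv_lt_0_compat; [apply pow_lt|apply sqrt_lt_R0]; auto. }
  replace (Derive (Derive M) mu * N nu - / mu * Derive M mu * N nu + M mu * Derive (Derive N) nu)
    with (M mu * N nu * (A - B)) by (unfold A, B; field; lra).
  split; intro H.
  - apply Rmult_integral in H as [H|H]; [lra|].
    apply Rmult_integral in H as [H|H]; [|lra].
    apply Rmult_integral in H as [H|H]; contradiction.
  - rewrite H. ring.
Qed.

Lemma E2_sepR_eq0 (M N : R -> R) lam mu nu :
  twice_diff_pos M -> twice_diff N -> 0 < mu ->
  Derive (Derive M) mu = / mu * Derive M mu + lam * M mu ->
  Derive (Derive N) nu = - lam * N nu ->
  E2 (sepR M N) mu nu = 0.
Proof.
  intros HM HN Hmu EM EN. rewrite E2_sepR, EM, EN by auto. ring.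
Qed.

Lemma E2_sepR_separates (M N : R -> R) :
  twice_diff_pos M -> twice_diff N ->
  (forall mu, 0 < mu -> M mu <> 0) -> (forall nu, N nu <> 0) ->
  (forall mu nu, 0 < mu -> E2 (sepR M N) mu nu = 0) <->
  exists lam : R,
    (forall mu, 0 < mu -> Derive (Derive M) mu / M mu - / mu * (Derive M mu / M mu) = lam) /\
    (forall nu, - (Derive (Derive N) nu / N nu) = lam).
Proof.
  intros HM HN HM0 HN0.
  rewrite <- (separation_constant (fun mu => 0 < mu)
    (fun mu => Derive (Derive M) mu / M mu - / mu * (Derive M mu / M mu))
    (fun nu => - (Derive (Derive N) nu / N nu)) 1) by lra.
  split; intros H mu nu Hmu; apply E2_sepR_eq0_iff; auto.
Qed.

(** * Second order linear equations *)

Definition is_ode2_sol (D : R -> Prop) (p q y : R -> R) : Prop :=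
  forall x, D x -> ex_derive y x /\ ex_derive (Derive y) x /\
    Derive (Derive y) x = p x * Derive y x + q x * y x.

Definition wronskian (y1 y2 : R -> R) (x : R) : R :=
  y1 x * Derive y2 x - Derive y1 x * y2 x.

Definition is_interval (D : R -> Prop) : Prop :=
  forall x y z, D x -> D y -> x <= z <= y -> D z.

Lemma is_derive_zero_const (D : R -> Prop) (g : R -> R) x y :
  is_interval D -> (forall t, D t -> is_derive g t 0) -> D x -> D y -> g x = g y.
Proof.
  intros HD Hg.
  assert (Hlt : forall a b, D a -> D b -> a < b -> g a = g b).
  { intros a b Ha Hb Hab. apply eq_is_derive; [|exact Hab].
    intros t Ht. apply Hg, (HD a b); auto. }
  intros Hx Hy. destruct (Rtotal_order x y) as [H|[->|H]]; auto.
  symmetry; auto.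
Qed.

Section SecondOrderLinearODE.

Variables (D : R -> Prop) (p q : R -> R).

Lemma wronskian_is_derive y1 y2 x :
  is_ode2_sol D p q y1 -> is_ode2_sol D p q y2 -> D x ->
  is_derive (wronskian y1 y2) x (p x * wronskian y1 y2 x).
Proof.
  intros H1 H2 Hx.
  destruct (H1 x Hx) as [d1 [dd1 e1]], (H2 x Hx) as [d2 [dd2 e2]].
  unfold wronskian. auto_derive; [tauto|]. eta_Derive. rewrite e1, e2. ring.
Qed.

Hypothesis D_open : open D.

Lemma is_ode2_sol_ext f g :
  (forall x, D x -> f x = g x) -> is_ode2_sol D p q f -> is_ode2_sol D p q g.
Proof.
  intros Hfg Hf.
  assert (Hloc : forall x, D x -> locally x (fun t => f t = g t)).
  { intros x Hx. apply (filter_imp D); auto. }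
  assert (HD : forall x, D x -> Derive f x = Derive g x).
  { intros x Hx. apply Derive_ext_loc; auto. }
  intros x Hx. destruct (Hf x Hx) as [d1 [d2 e]].
  assert (HDloc : locally x (fun t => Derive f t = Derive g t)).
  { apply (filter_imp D); auto. }
  split; [|split].
  - apply (ex_derive_ext_loc f); auto.
  - apply (ex_derive_ext_loc (Derive f)); auto.
  - rewrite <- (Derive_ext_loc _ _ x HDloc), <- HD, <- Hfg; auto.
Qed.

Lemma is_ode2_sol_lin_comb c1 c2 y1 y2 :
  is_ode2_sol D p q y1 -> is_ode2_sol D p q y2 ->
  is_ode2_sol D p q (fun x => c1 * y1 x + c2 * y2 x).
Proof.
  intros H1 H2.
  assert (HD : forall x, D x ->
    Derive (fun t => c1 * y1 t + c2 * y2 t) x = c1 * Derive y1 x + c2 * Derive y2 x).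
  { intros x Hx. destruct (H1 x Hx) as [d1 _], (H2 x Hx) as [d2 _].
    apply is_derive_unique. auto_derive; [tauto|]. eta_Derive. ring. }
  intros x Hx. destruct (H1 x Hx) as [d1 [dd1 e1]], (H2 x Hx) as [d2 [dd2 e2]].
  assert (HDloc : locally x (fun t =>
    c1 * Derive y1 t + c2 * Derive y2 t = Derive (fun t => c1 * y1 t + c2 * y2 t) t)).
  { apply (filter_imp D); auto. intros t Ht. symmetry; auto. }
  split; [|split].
  - auto_derive; tauto.
  - apply (ex_derive_ext_loc _ _ x HDloc). auto_derive; tauto.
  - rewrite <- (Derive_ext_loc _ _ x HDloc), HD by auto.
    rewrite Derive_plus, !Derive_scal, e1, e2; try ring; apply ex_derive_scal; auto.
Qed.

Hypothesis D_interval : is_interval D.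

Variable rho : R -> R.
Hypothesis rho_is_derive : forall x, D x -> is_derive rho x (p x * rho x).
Hypothesis rho_neq0 : forall x, D x -> rho x <> 0.

Lemma wronskian_abel y1 y2 x0 x :
  is_ode2_sol D p q y1 -> is_ode2_sol D p q y2 -> D x0 -> D x ->
  wronskian y1 y2 x = wronskian y1 y2 x0 / rho x0 * rho x.
Proof.
  intros H1 H2 Hx0 Hx.
  assert (Hconst : wronskian y1 y2 x / rho x = wronskian y1 y2 x0 / rho x0).
  { apply (is_derive_zero_const D (fun t => wronskian y1 y2 t / rho t)); auto.
    intros t Ht. pose proof (wronskian_is_derive y1 y2 t H1 H2 Ht) as HW.
    pose proof (rho_is_derive t Ht) as Hr. pose proof (rho_neq0 t Ht).
    auto_derive; [repeat split; eauto; eexists; eauto|].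
    eta_Derive. rewrite (is_derive_unique _ _ _ HW), (is_derive_unique _ _ _ Hr). field; auto. }
  rewrite <- Hconst. field. auto.
Qed.

Lemma ode2_sol_span y1 y2 x0 u :
  is_ode2_sol D p q y1 -> is_ode2_sol D p q y2 -> D x0 -> wronskian y1 y2 x0 <> 0 ->
  is_ode2_sol D p q u ->
  exists c1 c2, forall x, D x -> u x = c1 * y1 x + c2 * y2 x.
Proof.
  intros H1 H2 Hx0 HW Hu.
  exists (wronskian u y2 x0 / wronskian y1 y2 x0), (- (wronskian u y1 x0 / wronskian y1 y2 x0)).
  intros x Hx.
  assert (Hcramer : u x * wronskian y1 y2 x = y1 x * wronskian u y2 x - y2 x * wronskian u y1 x)
    by (unfold wronskian; ring).
  rewrite !(wronskian_abel _ _ x0 x) in Hcramer by auto.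
  pose proof (rho_neq0 x Hx). pose proof (rho_neq0 x0 Hx0).
  apply (Rmult_eq_reg_r (wronskian y1 y2 x0 / rho x0 * rho x)).
  - rewrite Hcramer. field. auto.
  - apply Rmult_integral_contrapositive_currified; auto.
    apply Rmult_integral_contrapositive_currified; auto. apply Rinv_neq_0_compat; auto.
Qed.

Lemma ode2_sol_iff_span y1 y2 x0 u :
  is_ode2_sol D p q y1 -> is_ode2_sol D p q y2 -> D x0 -> wronskian y1 y2 x0 <> 0 ->
  is_ode2_sol D p q u <-> exists c1 c2, forall x, D x -> u x = c1 * y1 x + c2 * y2 x.
Proof.
  intros H1 H2 Hx0 HW. split.
  - apply (ode2_sol_span y1 y2 x0); auto.
  - intros [c1 [c2 Hu]]. apply (is_ode2_sol_ext (fun x => c1 * y1 x + c2 * y2 x)).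
    + intros x Hx. symmetry; auto.
    + apply is_ode2_sol_lin_comb; auto.
Qed.

End SecondOrderLinearODE.

Lemma Derive_cos_scal n : Derive (fun v => cos (n * v)) = fun v => - n * sin (n * v).
Proof.
  apply functional_extensionality. intro v. apply is_derive_unique. auto_derive; auto. ring.
Qed.

Lemma Derive_sin_scal n : Derive (fun v => sin (n * v)) = fun v => n * cos (n * v).
Proof.
  apply functional_extensionality. intro v. apply is_derive_unique. auto_derive; auto. ring.
Qed.

Lemma is_ode2_sol_cos n :
  is_ode2_sol (fun _ => True) (fun _ => 0) (fun _ => - n ^ 2) (fun v => cos (n * v)).
Proof.
  intros v _. rewrite Derive_cos_scal. repeat split; [auto_derive; auto..|].
  apply is_derive_unique. auto_derive; auto. ring.
Qed.

Lemma is_ode2_sol_sin n :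
  is_ode2_sol (fun _ => True) (fun _ => 0) (fun _ => - n ^ 2) (fun v => sin (n * v)).
Proof.
  intros v _. rewrite Derive_sin_scal. repeat split; [auto_derive; auto..|].
  apply is_derive_unique. auto_derive; auto. ring.
Qed.

Lemma wronskian_cos_sin n v : wronskian (fun v => cos (n * v)) (fun v => sin (n * v)) v = n.
Proof.
  unfold wronskian. rewrite Derive_cos_scal, Derive_sin_scal.
  transitivity (n * (Rsqr (sin (n * v)) + Rsqr (cos (n * v)))); [unfold Rsqr; ring|].
  rewrite sin2_cos2. ring.
Qed.

Lemma harmonic_sol_iff n (N : R -> R) :
  n <> 0 -> twice_diff N ->
  (forall nu, Derive (Derive N) nu = - n ^ 2 * N nu) <->
  exists c3 c4, forall nu, N nu = c3 * cos (n * nu) + c4 * sin (n * nu).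
Proof.
  intros Hn HN.
  assert (Hsol : (forall nu, Derive (Derive N) nu = - n ^ 2 * N nu) <->
                 is_ode2_sol (fun _ => True) (fun _ => 0) (fun _ => - n ^ 2) N).
  { split.
    - intros H nu _. destruct (HN nu). repeat split; auto. rewrite H. ring.
    - intros H nu. destruct (H nu I) as [_ [_ E]]. rewrite E. ring. }
  assert (Hint : is_interval (fun _ => True)) by easy.
  assert (Hone : forall x, True -> is_derive (fun _ => 1) x (0 * 1)).
  { intros x _. auto_derive; auto. ring. }
  rewrite Hsol, (ode2_sol_iff_span _ _ _ open_true Hint (fun _ => 1) Hone (fun _ _ => R1_neq_R0)
    _ _ 0 N (is_ode2_sol_cos n) (is_ode2_sol_sin n) I) by (rewrite wronskian_cos_sin; auto).
  split; intros [c3 [c4 H]]; exists c3, c4; [intros nu; apply H; auto|intros nu _; apply H].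
Qed.

(** * The modified Bessel equation of order one *)

Definition is_bessel1_sol (f : R -> R) : Prop :=
  forall x, 0 < x -> ex_derive f x /\ ex_derive (Derive f) x /\
    x ^ 2 * Derive (Derive f) x + x * Derive f x - (x ^ 2 + 1) * f x = 0.

Lemma Derive_rescale (f : R -> R) n m :
  ex_derive f (n * m) -> Derive (fun m => m * f (n * m)) m = f (n * m) + n * m * Derive f (n * m).
Proof. intro Hf. apply is_derive_unique. auto_derive; auto. eta_Derive. ring. Qed.

Lemma wronskian_rescale (f g : R -> R) n m :
  ex_derive f (n * m) -> ex_derive g (n * m) ->
  wronskian (fun m => m * f (n * m)) (fun m => m * g (n * m)) m = n * m ^ 2 * wronskian f g (n * m).
Proof.
  intros Hf Hg. unfold wronskian at 1. rewrite !Derive_rescale by auto.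
  unfold wronskian. ring.
Qed.

Lemma is_ode2_sol_bessel1_rescale n (f : R -> R) :
  0 < n -> is_bessel1_sol f ->
  is_ode2_sol (fun m => 0 < m) (fun m => / m) (fun _ => n ^ 2) (fun m => m * f (n * m)).
Proof.
  intros Hn Hf m Hm.
  assert (Hnm : 0 < n * m) by nra.
  destruct (Hf (n * m) Hnm) as [d1 [d2 Ebessel]].
  assert (Hloc : locally m (fun t =>
    f (n * t) + n * t * Derive f (n * t) = Derive (fun m => m * f (n * m)) t)).
  { apply (filter_imp (fun t => 0 < t)); [|apply open_gt, Hm].
    intros t Ht. symmetry. apply Derive_rescale, Hf. nra. }
  assert (HDD : is_derive (fun t => f (n * t) + n * t * Derive f (n * t)) m
                  (2 * n * Derive f (n * m) + n ^ 2 * m * Derive (Derive f) (n * m))).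
  { auto_derive; [repeat split; auto|]. eta_Derive. ring. }
  repeat split.
  - auto_derive. auto.
  - apply (ex_derive_ext_loc _ _ m Hloc). eexists. exact HDD.
  - replace (Derive (Derive (fun m => m * f (n * m))) m)
      with (2 * n * Derive f (n * m) + n ^ 2 * m * Derive (Derive f) (n * m))
      by (rewrite <- (Derive_ext_loc _ _ m Hloc); symmetry; apply is_derive_unique, HDD).
    rewrite Derive_rescale by auto.
    replace (Derive (Derive f) (n * m))
      with ((((n * m) ^ 2 + 1) * f (n * m) - n * m * Derive f (n * m)) / (n * m) ^ 2)
      by (field_simplify_eq; [lra|]; repeat split; apply Rgt_not_eq; nra).
    field. lra.
Qed.

Lemma rescaled_bessel1_sol_iff n (f g M : R -> R) :
  0 < n -> is_bessel1_sol f -> is_bessel1_sol g -> wronskian f g n <> 0 -> twice_diff_pos M ->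
  (forall mu, 0 < mu -> Derive (Derive M) mu - / mu * Derive M mu = n ^ 2 * M mu) <->
  exists c1 c2, forall mu, 0 < mu -> M mu = c1 * mu * f (n * mu) + c2 * mu * g (n * mu).
Proof.
  intros Hn Hf Hg HW HM.
  assert (Hsol : (forall mu, 0 < mu -> Derive (Derive M) mu - / mu * Derive M mu = n ^ 2 * M mu) <->
                 is_ode2_sol (fun m => 0 < m) (fun m => / m) (fun _ => n ^ 2) M).
  { split.
    - intros H mu Hmu. destruct (HM mu Hmu). repeat split; auto. rewrite <- H; auto. ring.
    - intros H mu Hmu. destruct (H mu Hmu) as [_ [_ E]]. rewrite E. ring. }
  assert (Hint : is_interval (fun m => 0 < m)) by (intros x y z Hx _ Hz; lra).
  assert (Hid : forall x, 0 < x -> is_derive (fun m => m) x (/ x * x)).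
  { intros x Hx. auto_derive; auto. field. lra. }
  destruct (Hf n Hn) as [df _], (Hg n Hn) as [dg _].
  rewrite Hsol, (ode2_sol_iff_span _ _ _ (open_gt 0) Hint (fun m => m) Hid
    (fun x Hx => Rgt_not_eq _ _ Hx) _ _ 1 M
    (is_ode2_sol_bessel1_rescale n f Hn Hf) (is_ode2_sol_bessel1_rescale n g Hn Hg) Rlt_0_1).
  - split; intros [c1 [c2 H]]; exists c1, c2; intros mu Hmu; rewrite H by exact Hmu; ring.
  - rewrite (wronskian_rescale f g n 1), pow1, !Rmult_1_r by (rewrite Rmult_1_r; auto).
    apply Rmult_integral_contrapositive_currified; lra.
Qed.

(** * The function I1 *)

Definition I1_coef (k : nat) : R := / (INR (fact k) * INR (fact (S k))).

Definition I1_pseries : R -> R := PSeries I1_coef.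

Lemma I1_coef_pos k : 0 < I1_coef k.
Proof.
  apply Rinv_0_lt_compat, Rmult_lt_0_compat; apply INR_fact_lt_0.
Qed.

Lemma I1_coef_S k : I1_coef (S k) = I1_coef k / (INR (S k) * INR (S (S k))).
Proof.
  unfold I1_coef. rewrite !fact_simpl, !mult_INR.
  pose proof (INR_fact_neq_0 k). pose proof (pos_INR k).
  rewrite !S_INR. field. repeat split; lra.
Qed.

Lemma CV_radius_I1_coef : CV_radius I1_coef = p_infty.
Proof.
  apply CV_radius_infinite_DAlembert.
  - intro k. apply Rgt_not_eq, I1_coef_pos.
  - apply (is_lim_seq_ext (fun k => / (INR (S k) * INR (S (S k))))).
    { intro k. rewrite I1_coef_S. pose proof (I1_coef_pos k).
      pose proof (lt_0_INR (S k) ltac:(lia)). pose proof (lt_0_INR (S (S k)) ltac:(lia)).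
      rewrite Rabs_pos_eq; [field; split; lra|].
      apply Rlt_le, Rmult_lt_0_compat; [|apply Rinv_0_lt_compat; nra].
      apply Rdiv_lt_0_compat; nra. }
    apply (is_lim_seq_le_le (fun _ => 0) _ (fun k => / INR (S k))).
    + intro k. pose proof (lt_0_INR (S k) ltac:(lia)).
      assert (1 <= INR (S (S k))) by (rewrite S_INR; lra).
      split; [apply Rlt_le, Rinv_0_lt_compat; nra|apply Rinv_le_contravar; nra].
    + apply is_lim_seq_const.
    + apply (is_lim_seq_incr_1 (fun k => / INR k)).
      replace (Finite 0) with (Rbar_inv p_infty) by reflexivity.
      apply is_lim_seq_inv; [apply is_lim_seq_INR|discriminate].
Qed.

Lemma CV_radius_I1_coef_derive : CV_radius (PS_derive I1_coef) = p_infty.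
Proof. rewrite CV_radius_derive. apply CV_radius_I1_coef. Qed.

Lemma ex_pseries_infinite_radius (a : nat -> R) z : CV_radius a = p_infty -> ex_pseries a z.
Proof. intro Ha. apply CV_radius_inside. rewrite Ha. exact I. Qed.

Lemma Derive_I1_pseries : Derive I1_pseries = PSeries (PS_derive I1_coef).
Proof.
  apply functional_extensionality. intro z. apply Derive_PSeries.
  rewrite CV_radius_I1_coef. exact I.
Qed.

Lemma Derive2_I1_pseries : Derive (Derive I1_pseries) = PSeries (PS_derive (PS_derive I1_coef)).
Proof.
  rewrite Derive_I1_pseries. apply functional_extensionality. intro z. apply Derive_PSeries.
  rewrite CV_radius_I1_coef_derive. exact I.
Qed.

Lemma ex_derive_I1_pseries z : ex_derive I1_pseries z.
Proof. apply ex_derive_PSeries. rewrite CV_radius_I1_coef. exact I. Qed.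

Lemma ex_derive_Derive_I1_pseries z : ex_derive (Derive I1_pseries) z.
Proof.
  rewrite Derive_I1_pseries. apply ex_derive_PSeries.
  rewrite CV_radius_I1_coef_derive. exact I.
Qed.

Lemma I1_pseries_ode z :
  z * Derive (Derive I1_pseries) z + 2 * Derive I1_pseries z - I1_pseries z = 0.
Proof.
  rewrite Derive2_I1_pseries, Derive_I1_pseries. unfold I1_pseries.
  assert (E0 : ex_pseries I1_coef z)
    by (apply ex_pseries_infinite_radius, CV_radius_I1_coef).
  assert (E1 : ex_pseries (PS_derive I1_coef) z)
    by (apply ex_pseries_infinite_radius, CV_radius_I1_coef_derive).
  assert (E2 : ex_pseries (PS_derive (PS_derive I1_coef)) z)
    by (apply ex_pseries_infinite_radius; rewrite CV_radius_derive; apply CV_radius_I1_coef_derive).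
  rewrite <- PSeries_incr_1, <- (PSeries_scal 2), <- PSeries_plus, <- PSeries_minus,
    <- (PSeries_const_0 z);
    auto using ex_pseries_incr_1, ex_pseries_scal, ex_pseries_plus, Rmult_comm.
  apply PSeries_ext. intros [|k]; unfold PS_minus, PS_plus, PS_scal, PS_incr_1, PS_derive;
    cbn -[INR]; unfold plus, opp, scal, mult, zero; cbn -[INR]; unfold mult; cbn -[INR].
  - rewrite I1_coef_S. simpl. R_eq. field.
  - rewrite (I1_coef_S (S k)). rewrite !S_INR. pose proof (pos_INR k). R_eq. field. lra.
Qed.

Lemma I1_eq x : I1 x = x / 2 * I1_pseries (x ^ 2 / 4).
Proof.
  unfold I1, I1_pseries, PSeries. rewrite <- Series_scal_l. apply Series_ext. intro k.
  rewrite !Nat.add_1_r, <- tech_pow_Rmult, pow_mult.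
  replace ((x / 2) ^ 2) with (x ^ 2 / 4) by field.
  unfold I1_coef. pose proof (INR_fact_neq_0 k). pose proof (INR_fact_neq_0 (S k)).
  field. auto.
Qed.

Lemma Derive_I1 :
  Derive I1 = fun x => I1_pseries (x ^ 2 / 4) / 2 + x ^ 2 / 4 * Derive I1_pseries (x ^ 2 / 4).
Proof.
  apply functional_extensionality. intro x. apply is_derive_unique.
  apply (is_derive_ext (fun x => x / 2 * I1_pseries (x ^ 2 / 4))); [intro; symmetry; apply I1_eq|].
  auto_derive; [apply ex_derive_I1_pseries|]. eta_Derive.
  replace (x * (x * 1) * / 4) with (x ^ 2 / 4) by field. R_eq. field.
Qed.

Lemma is_bessel1_sol_I1 : is_bessel1_sol I1.
Proof.
  intros x _.
  assert (HDD : is_derive (Derive I1) x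
    (3 * x / 4 * Derive I1_pseries (x ^ 2 / 4)
     + x ^ 3 / 8 * Derive (Derive I1_pseries) (x ^ 2 / 4))).
  { rewrite Derive_I1.
    auto_derive; [repeat split; apply ex_derive_I1_pseries || apply ex_derive_Derive_I1_pseries|].
    eta_Derive. replace (x * (x * 1) * / 4) with (x ^ 2 / 4) by field. R_eq. field. }
  split; [|split; [eexists; exact HDD|]].
  - apply (ex_derive_ext (fun x => x / 2 * I1_pseries (x ^ 2 / 4)));
      [intro; symmetry; apply I1_eq|].
    auto_derive. apply ex_derive_I1_pseries.
  - rewrite (is_derive_unique _ _ _ HDD), Derive_I1, I1_eq.
    transitivity (x ^ 3 / 2 * (x ^ 2 / 4 * Derive (Derive I1_pseries) (x ^ 2 / 4)
      + 2 * Derive I1_pseries (x ^ 2 / 4) - I1_pseries (x ^ 2 / 4))); [field|].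
    rewrite I1_pseries_ode. ring.
Qed.

Lemma PSeries_ge_coef0 (a : nat -> R) z :
  (forall k, 0 <= a k) -> 0 <= z -> ex_pseries a z -> a 0%nat <= PSeries a z.
Proof.
  intros Ha Hz Hex. unfold PSeries. apply ex_pseries_R in Hex.
  rewrite Series_incr_1, pow_O, Rmult_1_r by exact Hex.
  set (b := fun k => a (S k) * z ^ S k).
  assert (0 <= Series b).
  { replace 0 with (Series (fun k => 0 * b k)) by (rewrite Series_scal_l; ring).
    apply Series_le.
    - intro k. assert (0 <= b k) by (apply Rmult_le_pos; [apply Ha|apply pow_le, Hz]). lra.
    - apply (ex_series_incr_1 (fun k => a k * z ^ k)), Hex. }
  lra.
Qed.

Lemma I1_pseries_ge_1 z : 0 <= z -> 1 <= I1_pseries z.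
Proof.
  intro Hz. replace 1 with (I1_coef 0) by (unfold I1_coef; simpl; field).
  apply PSeries_ge_coef0; [intro; apply Rlt_le, I1_coef_pos|auto|].
  apply ex_pseries_infinite_radius, CV_radius_I1_coef.
Qed.

Lemma Derive_I1_pseries_ge_0 z : 0 <= z -> 0 <= Derive I1_pseries z.
Proof.
  intro Hz. rewrite Derive_I1_pseries.
  assert (Hc : forall k, 0 <= PS_derive I1_coef k).
  { intro k. apply Rmult_le_pos; [apply pos_INR|apply Rlt_le, I1_coef_pos]. }
  apply (Rle_trans _ (PS_derive I1_coef 0)); [apply Hc|].
  apply PSeries_ge_coef0; auto.
  apply ex_pseries_infinite_radius, CV_radius_I1_coef_derive.
Qed.

Lemma I1_pos x : 0 < x -> 0 < I1 x.
Proof.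
  intro Hx. rewrite I1_eq. pose proof (I1_pseries_ge_1 (x ^ 2 / 4)). nra.
Qed.

Lemma Derive_I1_pos x : 0 < Derive I1 x.
Proof.
  rewrite Derive_I1.
  assert (Hz : 0 <= x ^ 2 / 4) by nra.
  pose proof (I1_pseries_ge_1 _ Hz). pose proof (Derive_I1_pseries_ge_0 _ Hz). nra.
Qed.

(** * The function K1 *)

Lemma exp_le_compat x y : x <= y -> exp x <= exp y.
Proof.
  intro H. destruct (Rle_lt_or_eq_dec _ _ H) as [Hlt|Heq]; [|rewrite Heq; lra].
  apply Rlt_le, exp_increasing, Hlt.
Qed.

Lemma cosh_ge_1 t : 1 <= cosh t.
Proof.
  unfold cosh. pose proof (exp_ineq1_le t). pose proof (exp_ineq1_le (- t)). lra.
Qed.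

Lemma exp_le_2cosh t : exp t <= 2 * cosh t.
Proof. unfold cosh. pose proof (exp_pos (- t)). lra. Qed.

Lemma sinh_le_cosh t : sinh t <= cosh t.
Proof. unfold sinh, cosh. pose proof (exp_pos (- t)). lra. Qed.

Lemma sinh_nonneg t : 0 <= t -> 0 <= sinh t.
Proof.
  intro Ht. unfold sinh. pose proof (exp_le_compat (- t) t ltac:(lra)). lra.
Qed.

Lemma pow_le_fact_exp m y : 0 <= y -> y ^ m <= INR (fact m) * exp y.
Proof.
  intro Hy. pose proof (INR_fact_lt_0 m) as Hf.
  assert (Hterm : y ^ m / INR (fact m) <= exp y).
  { eapply Rle_trans; [|apply (exp_ge_taylor y m Hy)].
    destruct m as [|m]; [simpl; lra|].
    rewrite tech5. assert (0 <= sum_f_R0 (fun k => y ^ k / INR (fact k)) m); [|lra].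
    apply cond_pos_sum. intro k.
    apply Rmult_le_pos; [apply pow_le, Hy|apply Rlt_le, Rinv_0_lt_compat, INR_fact_lt_0]. }
  apply (Rmult_le_compat_l (INR (fact m))) in Hterm; [|lra].
  replace (INR (fact m) * (y ^ m / INR (fact m))) with (y ^ m) in Hterm by (field; lra).
  exact Hterm.
Qed.

Definition K_integrand (k : nat) (x t : R) : R := exp (- x * cosh t) * cosh t ^ k.

Definition Kint (k : nat) (x : R) : R :=
  RInt_gen (K_integrand k x) (at_point 0) (Rbar_locally p_infty).

Lemma K_integrand_pos k x t : 0 < K_integrand k x t.
Proof. apply Rmult_lt_0_compat; [apply exp_pos|apply pow_lt; pose proof (cosh_ge_1 t); lra]. Qed.

Lemma K_integrand_le_exp k x t :
  0 < x -> K_integrand k x t <= 2 * INR (fact (S k)) / x ^ S k * exp (- t).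
Proof.
  (* With c = cosh t: c^k <= c^(k+1) * 2 e^(-t), and (x c)^(k+1) e^(-x c) <= (k+1)!. *)
  intro Hx. unfold K_integrand.
  pose proof (cosh_ge_1 t) as Hc. pose proof (exp_le_2cosh t). pose proof (exp_pos t).
  assert (Hexp : 1 <= 2 * cosh t * exp (- t)).
  { rewrite exp_Ropp. apply (Rmult_le_reg_r (exp t)); [lra|].
    replace (2 * cosh t * / exp t * exp t) with (2 * cosh t) by (field; lra). lra. }
  assert (Hpow : (x * cosh t) ^ S k <= INR (fact (S k)) * exp (x * cosh t))
    by (apply pow_le_fact_exp; nra).
  assert (Hea : exp (- x * cosh t) * exp (x * cosh t) = 1).
  { rewrite <- exp_plus. replace (- x * cosh t + x * cosh t) with 0 by ring. apply exp_0. }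
  assert (Hxk : 0 < x ^ S k) by (apply pow_lt, Hx).
  pose proof (exp_pos (- x * cosh t)). pose proof (exp_pos (- t)).
  assert (Hck : 0 <= cosh t ^ k) by (apply pow_le; lra).
  assert (Hmom : exp (- x * cosh t) * cosh t ^ S k <= INR (fact (S k)) / x ^ S k).
  { apply (Rmult_le_reg_l (x ^ S k)); [exact Hxk|].
    replace (x ^ S k * (exp (- x * cosh t) * cosh t ^ S k))
      with (exp (- x * cosh t) * (x * cosh t) ^ S k) by (rewrite Rpow_mult_distr; ring).
    replace (x ^ S k * (INR (fact (S k)) / x ^ S k))
      with (INR (fact (S k)) * (exp (- x * cosh t) * exp (x * cosh t)))
      by (rewrite Hea; field; lra).
    rewrite <- Rmult_assoc, (Rmult_comm (INR _)), Rmult_assoc.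
    apply Rmult_le_compat_l; lra. }
  apply (Rle_trans _ (exp (- x * cosh t) * cosh t ^ k * (2 * cosh t * exp (- t)))).
  - rewrite <- (Rmult_1_r (exp (- x * cosh t) * cosh t ^ k)) at 1.
    apply Rmult_le_compat_l; [apply Rmult_le_pos|]; lra.
  - replace (2 * INR (fact (S k)) / x ^ S k * exp (- t))
      with (2 * exp (- t) * (INR (fact (S k)) / x ^ S k)) by (unfold Rdiv; ring).
    replace (exp (- x * cosh t) * cosh t ^ k * (2 * cosh t * exp (- t)))
      with (2 * exp (- t) * (exp (- x * cosh t) * cosh t ^ S k)) by (simpl; ring).
    apply Rmult_le_compat_l; lra.
Qed.

Lemma K_integrand_continuous k x t : continuous (K_integrand k x) t.
Proof.
  apply (ex_derive_continuous (K_integrand k x)). unfold K_integrand, cosh. auto_derive. auto.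
Qed.

Lemma nondecreasing_bounded_cvg (F : R -> R) K :
  (forall a b, 0 <= a <= b -> F a <= F b) -> (forall b, 0 <= b -> F b <= K) ->
  exists l, filterlim F (Rbar_locally p_infty) (locally l) /\ (forall b, 0 <= b -> F b <= l).
Proof.
  intros Hmono HK.
  set (E := fun y => exists b, 0 <= b /\ y = F b).
  destruct (completeness E) as [l [Hub Hlub]].
  - exists K. intros y [b [Hb ->]]. auto.
  - exists (F 0), 0. split; [lra|reflexivity].
  - assert (Hle : forall b, 0 <= b -> F b <= l) by (intros b Hb; apply Hub; exists b; auto).
    exists l. split; [|exact Hle].
    apply filterlim_locally. intros eps.
    assert (Hb0 : exists b0, 0 <= b0 /\ l - eps < F b0).
    { apply Classical_Pred_Type.not_all_not_ex. intros Hnot.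
      assert (l <= l - eps); [|pose proof (cond_pos eps); lra].
      apply Hlub. intros y [b [Hb ->]]. apply Rnot_lt_le. intro Hlt. apply (Hnot b). auto. }
    destruct Hb0 as [b0 [Hb0 Hlt]]. exists b0. intros b Hb.
    pose proof (Hle b ltac:(lra)). pose proof (Hmono b0 b ltac:(lra)).
    apply Rabs_def1; simpl; unfold minus, plus, opp; simpl; lra.
Qed.

Lemma RInt_exp_neg_le K b : 0 <= K -> 0 <= b -> RInt (fun t => K * exp (- t)) 0 b <= K.
Proof.
  intros HK Hb.
  rewrite (is_RInt_unique _ 0 b (minus (- K * exp (- b)) (- K * exp (- 0)))).
  - simpl. unfold minus, plus, opp; simpl. rewrite Ropp_0, exp_0.
    pose proof (exp_pos (- b)). nra.
  - apply (is_RInt_derive (fun t => - K * exp (- t))).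
    + intros x _. auto_derive; auto. ring.
    + intros x _. apply (ex_derive_continuous (fun t => K * exp (- t))). auto_derive. auto.
Qed.

Lemma is_RInt_gen_exp_dominated (f : R -> R) K :
  (forall t, continuous f t) -> (forall t, 0 <= t -> 0 <= f t <= K * exp (- t)) ->
  exists l, is_RInt_gen f (at_point 0) (Rbar_locally p_infty) l /\
            (forall b, 0 <= b -> RInt f 0 b <= l).
Proof.
  intros Hc Hdom.
  assert (Hex : forall a b, ex_RInt f a b)
    by (intros; apply (ex_RInt_continuous (V := R_CompleteNormedModule)); auto).
  assert (HK : 0 <= K) by (pose proof (Hdom 0 (Rle_refl 0)); rewrite Ropp_0, exp_0 in H; lra).
  destruct (nondecreasing_bounded_cvg (fun b => RInt f 0 b) K) as [l [Hlim Hle]].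
  - intros a b Hab. rewrite <- (RInt_Chasles f 0 a b) by auto.
    assert (0 <= RInt f a b); [|simpl; unfold plus; simpl; lra].
    apply RInt_ge_0; [lra|auto|]. intros x Hx. apply Hdom. lra.
  - intros b Hb. eapply Rle_trans; [|apply (RInt_exp_neg_le K b HK Hb)].
    apply RInt_le; auto.
    + apply (ex_RInt_continuous (V := R_CompleteNormedModule)). intros z _.
      apply (ex_derive_continuous (fun t => K * exp (- t))). auto_derive. auto.
    + intros x Hx. apply Hdom. lra.
  - exists l. split; [|exact Hle].
    apply (filterlimi_lim_ext_loc (fun ab => RInt f (fst ab) (snd ab))).
    + apply Filter_prod with (fun _ => True) (fun _ => True); try apply filter_true.
      intros a b _ _. apply (RInt_correct (V := R_CompleteNormedModule)); auto.
    + intros P HP.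
      apply Filter_prod with (fun a => a = 0) (fun b => P (RInt f 0 b));
        [reflexivity|exact (Hlim P HP)|].
      intros a b -> Hb. exact Hb.
Qed.

Lemma Kint_integrable k x :
  0 < x -> exists l, is_RInt_gen (K_integrand k x) (at_point 0) (Rbar_locally p_infty) l /\
                     (forall b, 0 <= b -> RInt (K_integrand k x) 0 b <= l).
Proof.
  intro Hx. apply (is_RInt_gen_exp_dominated _ (2 * INR (fact (S k)) / x ^ S k)).
  - apply K_integrand_continuous.
  - intros t _. split; [apply Rlt_le, K_integrand_pos|apply K_integrand_le_exp, Hx].
Qed.

Lemma is_RInt_gen_Kint k x :
  0 < x -> is_RInt_gen (K_integrand k x) (at_point 0) (Rbar_locally p_infty) (Kint k x).
Proof.
  intro Hx. destruct (Kint_integrable k x Hx) as [l [Hl _]].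
  unfold Kint. rewrite (is_RInt_gen_unique _ _ Hl). exact Hl.
Qed.

Lemma Kint_pos k x : 0 < x -> 0 < Kint k x.
Proof.
  intro Hx. destruct (Kint_integrable k x Hx) as [l [Hl Hle]].
  unfold Kint. rewrite (is_RInt_gen_unique _ _ Hl).
  apply (Rlt_le_trans _ (RInt (K_integrand k x) 0 1)); [|apply Hle; lra].
  apply RInt_gt_0; [lra| |].
  - intros t _. apply K_integrand_pos.
  - intros t _. apply K_integrand_continuous.
Qed.

Lemma exp_sub_taylor1_le y : 0 <= exp y - 1 - y <= y ^ 2 * exp (Rabs y).
Proof.
  pose proof (exp_ineq1_le y). pose proof (exp_ineq1_le (- y)).
  assert (Hinv : exp y * exp (- y) = 1).
  { rewrite <- exp_plus. replace (y + - y) with 0 by ring. apply exp_0. }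
  pose proof (exp_pos y). pose proof (exp_pos (- y)).
  split; [lra|].
  destruct (Rle_or_lt 0 y) as [Hy|Hy].
  - rewrite Rabs_pos_eq by exact Hy.
    assert (exp y * (1 - y) <= exp y * exp (- y)) by (apply Rmult_le_compat_l; lra).
    nra.
  - rewrite Rabs_left by exact Hy. nra.
Qed.

Lemma K_integrand_taylor_le k x h t :
  0 < x -> Rabs h <= x / 2 ->
  Rabs (K_integrand k (x + h) t - K_integrand k x t + h * K_integrand (S k) x t)
  <= h ^ 2 * K_integrand (S (S k)) (x / 2) t.
Proof.
  intros Hx Hh. unfold K_integrand.
  pose proof (cosh_ge_1 t) as Hc.
  assert (Hck : 0 <= cosh t ^ k) by (apply pow_le; lra).
  assert (HA : 0 <= exp (- x * cosh t) * cosh t ^ k) by (pose proof (exp_pos (- x * cosh t)); nra).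
  replace (exp (- (x + h) * cosh t) * cosh t ^ k - exp (- x * cosh t) * cosh t ^ k
           + h * (exp (- x * cosh t) * cosh t ^ S k))
    with (exp (- x * cosh t) * cosh t ^ k * (exp (- h * cosh t) - 1 - - h * cosh t))
    by (replace (- (x + h) * cosh t) with (- x * cosh t + - h * cosh t) by ring;
        rewrite exp_plus; simpl; ring).
  destruct (exp_sub_taylor1_le (- h * cosh t)) as [Hlo Hhi].
  rewrite Rabs_mult, Rabs_Ropp, (Rabs_pos_eq (cosh t)) in Hhi by lra.
  rewrite Rabs_pos_eq by (apply Rmult_le_pos; auto).
  assert (Hexp : exp (- x * cosh t) * exp (Rabs h * cosh t) <= exp (- (x / 2) * cosh t)).
  { rewrite <- exp_plus. apply exp_le_compat. nra. }
  apply (Rle_trans _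
    (exp (- x * cosh t) * cosh t ^ k * ((- h * cosh t) ^ 2 * exp (Rabs h * cosh t))));
    [apply Rmult_le_compat_l; auto|].
  replace (exp (- x * cosh t) * cosh t ^ k * ((- h * cosh t) ^ 2 * exp (Rabs h * cosh t)))
    with (h ^ 2 * cosh t ^ S (S k) * (exp (- x * cosh t) * exp (Rabs h * cosh t))) by (simpl; ring).
  replace (h ^ 2 * (exp (- (x / 2) * cosh t) * cosh t ^ S (S k)))
    with (h ^ 2 * cosh t ^ S (S k) * exp (- (x / 2) * cosh t)) by ring.
  apply Rmult_le_compat_l; auto.
  apply Rmult_le_pos; [apply pow2_ge_0|apply pow_le; lra].
Qed.

Lemma Kint_taylor_le k x h :
  0 < x -> Rabs h <= x / 2 ->
  Rabs (Kint k (x + h) - Kint k x + h * Kint (S k) x) <= h ^ 2 * Kint (S (S k)) (x / 2).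
Proof.
  intros Hx Hh.
  assert (Hxh : 0 < x + h) by (pose proof (Rle_abs (- h)); rewrite Rabs_Ropp in *; lra).
  assert (Hx2 : 0 < x / 2) by lra.
  pose proof (is_RInt_gen_plus _ _ _ _
    (is_RInt_gen_minus _ _ _ _ (is_RInt_gen_Kint k (x + h) Hxh) (is_RInt_gen_Kint k x Hx))
    (is_RInt_gen_scal _ h _ (is_RInt_gen_Kint (S k) x Hx))) as Hdiff.
  pose proof (is_RInt_gen_scal _ (h ^ 2) _ (is_RInt_gen_Kint (S (S k)) (x / 2) Hx2)) as Hbound.
  assert (Hord : filter_prod (at_point 0) (Rbar_locally p_infty)
                   (fun ab : R * R => fst ab <= snd ab)).
  { apply Filter_prod with (fun a => a = 0) (fun b => 0 < b); [reflexivity|exists 0; auto|].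
    intros a b -> Hb. simpl. lra. }
  assert (Hpt : filter_prod (at_point 0) (Rbar_locally p_infty) (fun ab : R * R => forall t,
    fst ab <= t <= snd ab ->
    norm (plus (minus (K_integrand k (x + h) t) (K_integrand k x t))
               (scal h (K_integrand (S k) x t)))
    <= scal (h ^ 2) (K_integrand (S (S k)) (x / 2) t))).
  { apply Filter_prod with (fun _ => True) (fun _ => True); try apply filter_true.
    intros a b _ _ t _. apply K_integrand_taylor_le; auto. }
  exact (RInt_gen_norm _ _ _ _ Hord Hpt Hdiff Hbound).
Qed.

Lemma is_derive_of_quadratic_remainder (F : R -> R) x L C delta :
  0 < delta ->
  (forall h, Rabs h <= delta -> Rabs (F (x + h) - F x - h * L) <= C * h ^ 2) ->
  is_derive F x L.
Proof.
  intros Hd HF. apply is_derive_Reals. intros eps Heps.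
  set (C' := Rabs C + 1). assert (HC' : 0 < C') by (unfold C'; pose proof (Rabs_pos C); lra).
  assert (Hd' : 0 < Rmin delta (eps / C')) by (apply Rmin_pos; [|apply Rdiv_lt_0_compat]; lra).
  exists (mkposreal _ Hd'). intros h Hh0 Hh. simpl in Hh.
  pose proof (Rmin_l delta (eps / C')). pose proof (Rmin_r delta (eps / C')).
  assert (Hah : 0 < Rabs h) by (apply Rabs_pos_lt, Hh0).
  specialize (HF h ltac:(lra)).
  replace ((F (x + h) - F x) / h - L) with ((F (x + h) - F x - h * L) / h) by (field; auto).
  rewrite Rabs_div by auto. apply (Rmult_lt_reg_r (Rabs h)); [exact Hah|].
  unfold Rdiv. rewrite Rmult_assoc, Rinv_l, Rmult_1_r by lra.
  rewrite <- (Rabs_pos_eq (h ^ 2)), <- RPow_abs in HF by apply pow2_ge_0.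
  assert (C * Rabs h ^ 2 <= C' * Rabs h ^ 2)
    by (apply Rmult_le_compat_r; [apply pow2_ge_0|unfold C'; pose proof (Rle_abs C); lra]).
  assert (C' * Rabs h < eps) by (apply (Rmult_lt_reg_r (/ C')); [apply Rinv_0_lt_compat; lra|];
                                 field_simplify; lra).
  nra.
Qed.

Lemma is_derive_Kint k x : 0 < x -> is_derive (Kint k) x (- Kint (S k) x).
Proof.
  intro Hx. apply (is_derive_of_quadratic_remainder _ _ _ (Kint (S (S k)) (x / 2)) (x / 2)); [lra|].
  intros h Hh. replace (Kint k (x + h) - Kint k x - h * - Kint (S k) x)
    with (Kint k (x + h) - Kint k x + h * Kint (S k) x) by ring.
  rewrite (Rmult_comm _ (h ^ 2)). apply Kint_taylor_le; auto.
Qed.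

Lemma is_lim_exp_neg_p_infty : is_lim (fun t => exp (- t)) p_infty 0.
Proof.
  apply (is_lim_comp exp (fun t => - t) p_infty 0 m_infty).
  - apply is_lim_exp_m.
  - apply (is_lim_opp (fun t => t) p_infty p_infty), is_lim_id.
  - exists 0. intros. discriminate.
Qed.

Lemma filterlim_exp_neg_dominated (g : R -> R) C :
  (forall t, 0 <= t -> Rabs (g t) <= C * exp (- t)) ->
  filterlim g (Rbar_locally p_infty) (locally 0).
Proof.
  intro Hg.
  assert (Hlim : is_lim (fun t => C * exp (- t)) p_infty 0).
  { replace (Finite 0) with (Rbar_mult C 0) by (simpl; f_equal; ring).
    apply is_lim_scal_l, is_lim_exp_neg_p_infty. }
  apply (filterlim_le_le (fun t => - (C * exp (- t))) g (fun t => C * exp (- t)) 0).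
  - exists 0. intros t Ht. specialize (Hg t ltac:(lra)).
    pose proof (Rle_abs (g t)). pose proof (Rle_abs (- g t)). rewrite Rabs_Ropp in *. lra.
  - replace (Finite 0) with (Rbar_opp 0) by (simpl; f_equal; ring).
    exact (is_lim_opp _ p_infty 0 Hlim).
  - exact Hlim.
Qed.

Definition K_recurrence_primitive (x t : R) : R :=
  - exp (- x * cosh t) * (x * sinh t * cosh t + sinh t).

Lemma is_derive_K_recurrence_primitive x t :
  is_derive (K_recurrence_primitive x) t
    (x ^ 2 * K_integrand 3 x t - x * K_integrand 2 x t - (x ^ 2 + 1) * K_integrand 1 x t).
Proof.
  unfold K_recurrence_primitive, K_integrand, cosh, sinh. auto_derive; auto.
  rewrite exp_Ropp. pose proof (exp_pos t). unfold Rdiv. R_eq. field. lra.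
Qed.

Lemma K_recurrence_primitive_le x t :
  0 < x -> 0 <= t ->
  Rabs (K_recurrence_primitive x t)
  <= (x * (2 * INR (fact 3) / x ^ 3) + 2 * INR (fact 2) / x ^ 2) * exp (- t).
Proof.
  intros Hx Ht. unfold K_recurrence_primitive.
  pose proof (cosh_ge_1 t). pose proof (sinh_le_cosh t). pose proof (sinh_nonneg t Ht).
  pose proof (exp_pos (- x * cosh t)).
  assert (Hsc : x * sinh t * cosh t <= x * cosh t * cosh t)
    by (apply Rmult_le_compat_r; [|apply Rmult_le_compat_l]; lra).
  assert (0 <= x * sinh t * cosh t) by (apply Rmult_le_pos; [apply Rmult_le_pos|]; lra).
  rewrite Rabs_mult, Rabs_Ropp, (Rabs_pos_eq (exp _)), (Rabs_pos_eq (_ + _)) by lra.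
  apply (Rle_trans _ (x * K_integrand 2 x t + K_integrand 1 x t)).
  - unfold K_integrand. simpl pow.
    replace (x * (exp (- x * cosh t) * (cosh t * (cosh t * 1))) + exp (- x * cosh t) * (cosh t * 1))
      with (exp (- x * cosh t) * (x * cosh t * cosh t + cosh t)) by ring.
    apply Rmult_le_compat_l; lra.
  - pose proof (K_integrand_le_exp 2 x t Hx). pose proof (K_integrand_le_exp 1 x t Hx). nra.
Qed.

Lemma Kint_recurrence x :
  0 < x -> x ^ 2 * Kint 3 x - x * Kint 2 x - (x ^ 2 + 1) * Kint 1 x = 0.
Proof.
  intro Hx. set (G := K_recurrence_primitive x).
  assert (HDG : Derive G = fun t =>
    x ^ 2 * K_integrand 3 x t - x * K_integrand 2 x t - (x ^ 2 + 1) * K_integrand 1 x t).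
  { apply functional_extensionality. intro t.
    apply is_derive_unique, is_derive_K_recurrence_primitive. }
  assert (HG : is_RInt_gen (Derive G) (at_point 0) (Rbar_locally p_infty) (0 - G 0)).
  { apply is_RInt_gen_Derive.
    - apply Filter_prod with (fun _ => True) (fun _ => True); try apply filter_true.
      intros a b _ _ t _. eexists. apply is_derive_K_recurrence_primitive.
    - apply Filter_prod with (fun _ => True) (fun _ => True); try apply filter_true.
      intros a b _ _ t _. rewrite HDG.
      apply (ex_derive_continuous (fun t => x ^ 2 * K_integrand 3 x t - x * K_integrand 2 x t
        - (x ^ 2 + 1) * K_integrand 1 x t)).
      unfold K_integrand, cosh. auto_derive. auto.
    - intros P HP. exact (locally_singleton _ _ HP).
    - exact (filterlim_exp_neg_dominated _ _ (fun t Ht => K_recurrence_primitive_le x t Hx Ht)). }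
  assert (HG0 : G 0 = 0) by (unfold G, K_recurrence_primitive, sinh; rewrite Ropp_0; lra).
  rewrite HDG, HG0 in HG.
  pose proof (is_RInt_gen_minus _ _ _ _
    (is_RInt_gen_minus _ _ _ _ (is_RInt_gen_scal _ (x ^ 2) _ (is_RInt_gen_Kint 3 x Hx))
                               (is_RInt_gen_scal _ x _ (is_RInt_gen_Kint 2 x Hx)))
    (is_RInt_gen_scal _ (x ^ 2 + 1) _ (is_RInt_gen_Kint 1 x Hx))) as Hcomb.
  assert (Hval : RInt_gen (fun t => x ^ 2 * K_integrand 3 x t - x * K_integrand 2 x t
                                    - (x ^ 2 + 1) * K_integrand 1 x t)
                   (at_point 0) (Rbar_locally p_infty)
                 = x ^ 2 * Kint 3 x - x * Kint 2 x - (x ^ 2 + 1) * Kint 1 x)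
    by exact (is_RInt_gen_unique _ _ Hcomb).
  rewrite <- Hval, (is_RInt_gen_unique _ _ HG). apply Rminus_diag_eq, eq_refl.
Qed.

Lemma K1_Kint : K1 = Kint 1.
Proof.
  apply functional_extensionality. intro x. unfold K1, Kint, K_integrand.
  f_equal. apply functional_extensionality. intro t. ring.
Qed.

Lemma Derive_K1 x : 0 < x -> Derive K1 x = - Kint 2 x.
Proof. intro Hx. rewrite K1_Kint. apply is_derive_unique, is_derive_Kint, Hx. Qed.

Lemma is_bessel1_sol_K1 : is_bessel1_sol K1.
Proof.
  intros x Hx.
  assert (Hloc : locally x (fun t => - Kint 2 t = Derive K1 t)).
  { apply (filter_imp (fun t => 0 < t)); [|apply open_gt, Hx].
    intros t Ht. symmetry. apply Derive_K1, Ht. }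
  assert (HDD : is_derive (fun t => - Kint 2 t) x (Kint 3 x)).
  { rewrite <- (Ropp_involutive (Kint 3 x)).
    exact (is_derive_opp (Kint 2) x _ (is_derive_Kint 2 x Hx)). }
  rewrite K1_Kint in Hloc |- *. repeat split.
  - eexists. apply is_derive_Kint, Hx.
  - apply (ex_derive_ext_loc _ _ x Hloc). eexists. exact HDD.
  - replace (Derive (Derive (Kint 1)) x) with (Kint 3 x)
      by (rewrite <- (Derive_ext_loc _ _ x Hloc); symmetry; apply is_derive_unique, HDD).
    rewrite <- (locally_singleton _ _ Hloc). pose proof (Kint_recurrence x Hx). lra.
Qed.

Lemma wronskian_I1_K1_neg x : 0 < x -> wronskian I1 K1 x < 0.
Proof.
  intro Hx. unfold wronskian. rewrite Derive_K1, K1_Kint by exact Hx.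
  pose proof (I1_pos x Hx). pose proof (Derive_I1_pos x).
  pose proof (Kint_pos 1 x Hx). pose proof (Kint_pos 2 x Hx). nra.
Qed.

Lemma E2_bessel_harmonic_eq0 n c1 c2 c3 c4 mu nu :
  0 < n -> 0 < mu ->
  E2 (fun m v => / sqrt (m ^ 2 + v ^ 2)
                 * (c1 * m * I1 (n * m) + c2 * m * K1 (n * m))
                 * (c3 * cos (n * v) + c4 * sin (n * v))) mu nu = 0.
Proof.
  intros Hn Hmu.
  set (M := fun m => c1 * m * I1 (n * m) + c2 * m * K1 (n * m)).
  set (N := fun v => c3 * cos (n * v) + c4 * sin (n * v)).
  change (E2 (sepR M N) mu nu = 0).
  assert (HM : is_ode2_sol (fun m => 0 < m) (fun m => / m) (fun _ => n ^ 2) M).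
  { apply (is_ode2_sol_ext _ _ _ (open_gt 0)
      (fun m => c1 * (m * I1 (n * m)) + c2 * (m * K1 (n * m)))).
    - intros m _. unfold M. ring.
    - apply is_ode2_sol_lin_comb; [apply open_gt|apply is_ode2_sol_bessel1_rescale; auto..].
      + apply is_bessel1_sol_I1.
      + apply is_bessel1_sol_K1. }
  assert (HN : is_ode2_sol (fun _ => True) (fun _ => 0) (fun _ => - n ^ 2) N)
    by (apply is_ode2_sol_lin_comb; [apply open_true|apply is_ode2_sol_cos|apply is_ode2_sol_sin]).
  assert (HM2 : twice_diff_pos M) by (intros m Hm; destruct (HM m Hm) as [d1 [d2 _]]; auto).
  assert (HN2 : twice_diff N) by (intros v; destruct (HN v I) as [d1 [d2 _]]; auto).
  destruct (HM mu Hmu) as [_ [_ EM]], (HN nu I) as [_ [_ EN]].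
  apply (E2_sepR_eq0 M N (n ^ 2)); [exact HM2|exact HN2|exact Hmu| |].
  - rewrite EM. ring.
  - rewrite EN. ring.
Qed.

Theorem mainTheorem2 :
  (* (1) R-separation of E^2 psi = 0 *)
  (forall M N : R -> R,
     twice_diff_pos M -> twice_diff N ->
     (forall mu, 0 < mu -> M mu <> 0) -> (forall nu, N nu <> 0) ->
     ((forall mu nu, 0 < mu -> E2 (sepR M N) mu nu = 0) <->
      exists lam : R,
        (forall mu, 0 < mu ->
           Derive (Derive M) mu / M mu - / mu * (Derive M mu / M mu) = lam) /\
        (forall nu, - (Derive (Derive N) nu / N nu) = lam))) /\
  (* (2) solutions of the separated equations for lambda = n^2 > 0 *)
  (forall n : R, 0 < n ->
     (forall M : R -> R, twice_diff_pos M ->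
        ((forall mu, 0 < mu ->
            Derive (Derive M) mu - / mu * Derive M mu = n ^ 2 * M mu) <->
         exists c1 c2 : R, forall mu, 0 < mu ->
            M mu = c1 * mu * I1 (n * mu) + c2 * mu * K1 (n * mu))) /\
     (forall N : R -> R, twice_diff N ->
        ((forall nu, Derive (Derive N) nu = - (n ^ 2) * N nu) <->
         exists c3 c4 : R, forall nu,
            N nu = c3 * cos (n * nu) + c4 * sin (n * nu)))) /\
  (* (3) the explicit separated solutions *)
  (forall n c1 c2 c3 c4 : R, 0 < n ->
     forall mu nu, 0 < mu ->
       E2 (fun m v => / sqrt (m ^ 2 + v ^ 2)
                      * (c1 * m * I1 (n * m) + c2 * m * K1 (n * m))
                      * (c3 * cos (n * v) + c4 * sin (n * v))) mu nu = 0).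
Proof.
  split; [|split].
  - exact E2_sepR_separates.
  - intros n Hn. split.
    + intros M HM. apply rescaled_bessel1_sol_iff; auto using is_bessel1_sol_I1, is_bessel1_sol_K1.
      apply Rlt_not_eq, wronskian_I1_K1_neg, Hn.
    + intros N HN. apply harmonic_sol_iff; auto. lra.
  - intros n c1 c2 c3 c4 Hn mu nu Hmu. apply E2_bessel_harmonic_eq0; auto.
Qed.
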